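(* Let $n\geq 14$ and let $S$ be a Steiner quadruple system S$(3,4,n)$ on the point set $\mathbb{Z}_n$, and let $A,B$ be a partition of $\mathbb{Z}_n$ into subsets of sizes $3$ and $n-3$, respectively. If there exists a perpendicular array PA$_\lambda(4,n-3,n-3)$, then there exists a large set with multiplicity LS$(3,4,n;\mu)$, where $\mu=\lambda\binom{n-4}{3}\big/4$.
   Context: A Steiner system S$(t,k,n)$ is a pair $(Q,B)$ where $Q$ is an $n$-set and $B$ is a collection of $k$-subsets (blocks) of $Q$ such that every $t$-subset of $Q$ is contained in exactly one block. A large set with multiplicity $\mu$, LS$(t,k,n;\mu)$, is a family (the same system may occur more than once) of Steiner systems S$(t,k,n)$ on a common $n$-set $Q$ such that every $k$-subset of $Q$ is a block of exactly $\mu$ of the systems. A perpendicular array PA$_\lambda(k,\ell,m)$ is a $\lambda\binom{m}{k}\times \ell$ matrix with entries from an $m$-set such that each row has $\ell$ distinct entries and, in the submatrix formed by any $k$ columns, each $k$-subset of the $m$-set occurs (as the set of entries of a row) exactly $\lambda$ times. *)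

From mathcomp Require Import all_boot all_algebra.
Set Implicit Arguments. Unset Strict Implicit. Unset Printing Implicit Defensive.

Definition steiner_system (T : finType) (t k : nat) (B : {set {set T}}) : Prop :=
  (forall b, b \in B -> #|b| = k) /\
  (forall X : {set T}, #|X| = t -> #|[set b in B | X \subset b]| = 1).

(* A large set with multiplicity mu, LS(t,k,|T|;mu): a family (with repetitions
   allowed, hence a sequence) of Steiner systems S(t,k,|T|) on T such that every
   k-subset of T is a block of exactly mu of the systems. *)
Definition large_set (T : finType) (t k mu : nat) (F : seq {set {set T}}) : Prop :=
  (forall S, S \in F -> steiner_system t k S) /\
  (forall K : {set T}, #|K| = k -> count (fun S : {set {set T}} => K \in S) F = mu).

Definition perpendicular_array (lam k l m : nat) (M : 'M['I_m]_(lam * 'C(m, k), l)) : Prop :=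
  (forall i, injective (fun j => M i j)) /\
  (forall C : {set 'I_l}, #|C| = k ->
     forall K : {set 'I_m}, #|K| = k ->
       #|[set i | [set M i j | j in C] == K]| = lam).

(* Each row of the perpendicular array is a permutation of the n - 3 points of B;
   carried to B and extended by the identity on A it maps S to another Steiner
   quadruple system, and these lam * C(n-3, 4) systems form the large set.
   Rows of a PA_lam(4, m, m) are 4-homogeneous, hence also j-homogeneous for every
   j <= 4 (a function on j-sets whose sums over the j-subsets of all 4-sets are equal
   is constant as soon as j + 4 <= m).  So the number u K of systems containing a
   quadruple K only depends on K :&: A.  Each system has exactly one block through a
   triple W, so u sums to the number of systems over the quadruples through W;
   choosing W between K :&: A and K and inducting on #|A :\: K| forces
   (n - 3) * u K = lam * C(n-3, 4), i.e. u K = lam * C(n-4, 3) / 4. *)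

From mathcomp Require Import all_boot all_algebra zify.
Set Implicit Arguments. Unset Strict Implicit. Unset Printing Implicit Defensive.
Import GRing.Theory Num.Theory.

Section SubsetSums.
Variable T : finType.

Lemma exists_subset (U : {set T}) r :
  r <= #|U| -> exists2 K : {set T}, K \subset U & #|K| = r.
Proof.
move=> le_rU.
have : 0 < #|[set K : {set T} | K \subset U & #|K| == r]| by rewrite cards_draws bin_gt0.
by case/card_gt0P=> K; rewrite inE => /andP[sKU /eqP cK]; exists K.
Qed.

Local Open Scope ring_scope.

Lemma sum_subsets_const (V : nmodType) (K : {set T}) j (c : V) :
  \sum_(F : {set T} | (F \subset K) && (#|F| == j)%N) c = c *+ 'C(#|K|, j).
Proof. by rewrite -cards_draws -sumr_const; apply: eq_bigl => F; rewrite inE. Qed.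

Lemma sum_subsets_setU1 (V : nmodType) (K : {set T}) a j (h : {set T} -> V) :
  a \notin K ->
  \sum_(E : {set T} | (E \subset a |: K) && (#|E| == j.+1)%N) h E =
  \sum_(F : {set T} | (F \subset K) && (#|F| == j)%N) h (a |: F) +
  \sum_(E : {set T} | (E \subset K) && (#|E| == j.+1)%N) h E.
Proof.
move=> aK; rewrite (bigID (fun E : {set T} => a \in E)) /=; congr (_ + _).
  rewrite (reindex_onto (fun F : {set T} => a |: F) (fun E => E :\ a)) /=; last first.
    by move=> E /andP[_ aE]; rewrite setD1K.
  apply: eq_bigl => F; case: (boolP (a \in F)) => aF.
    have -> : (F \subset K) = false by apply: contraNF aK => /subsetP; apply.
    have -> : ((a |: F) :\ a == F) = false.
      by apply: contraTF aF => /eqP <-; rewrite setD11.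
    by rewrite !andbF.
  by rewrite setU11 setU1K // -subDset setU1K // cardsU1 aF eqxx !andbT.
apply: eq_bigl => E; rewrite -[in RHS](setU1K aK) subsetD1.
by rewrite andbAC.
Qed.

Lemma eq_of_exchange (X : Type) (U : {set T}) j (h : {set T} -> X) :
  (forall a b (F : {set T}), a \in U -> b \in U -> a != b -> F \subset U ->
     a \notin F -> b \notin F -> #|F| = j -> h (a |: F) = h (b |: F)) ->
  forall E E' : {set T}, E \subset U -> E' \subset U ->
    #|E| = j.+1 -> #|E'| = j.+1 -> h E = h E'.
Proof.
move=> hex E E' + sE'U + cE'.
have [d dE] : exists d, #|E :\: E'| = d by exists #|E :\: E'|.
elim: d E dE => [|d IH] E dE sEU cE.
  have sEE' : E \subset E' by rewrite -setD_eq0 -cards_eq0 dE.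
  suff -> : E = E' by [].
  by apply/eqP; rewrite eqEcard sEE' cE cE' leqnn.
have [a aEE'] : exists a, a \in E :\: E' by apply/card_gt0P; rewrite dE.
have [b bE'E] : exists b, b \in E' :\: E.
  by apply/card_gt0P; rewrite cardsD setIC cE' -cE -cardsD dE.
move: (aEE') bE'E; rewrite !inE => /andP[aE' aE] /andP[bE bE'].
have ab : a != b by apply: contraNneq aE' => ->.
have sEaU : E :\ a \subset U by apply: subset_trans (subD1set _ _) sEU.
have -> : h E = h (b |: E :\ a).
  rewrite -{1}(setD1K aE); apply: hex => //.
  - exact: (subsetP sEU).
  - exact: (subsetP sE'U).
  - by rewrite setD11.
  - by rewrite !inE negb_and bE orbT.
  - by move: cE; rewrite (cardsD1 a) aE => -[].
apply: IH.
- suff -> : (b |: E :\ a) :\: E' = (E :\: E') :\ a.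
    by move: dE; rewrite (cardsD1 a (E :\: E')) aEE' => -[].
  apply/setP => x; rewrite !inE.
  by case: (x =P b) => [->|_]; rewrite ?bE' ?andbF //= andbCA.
- by rewrite subUset sub1set (subsetP sE'U) ?sEaU.
- move: cE; rewrite (cardsD1 a E) aE => -[<-].
  by rewrite cardsU1 !inE negb_and bE orbT.
Qed.

Lemma eq_of_const_subset_sums (U : {set T}) j k (h : {set T} -> int) (c : int) :
  (j <= k)%N -> (j + k <= #|U|)%N ->
  (forall K : {set T}, K \subset U -> #|K| = k ->
     \sum_(E : {set T} | (E \subset K) && (#|E| == j)%N) h E = c) ->
  forall E E' : {set T}, E \subset U -> E' \subset U ->
    #|E| = j -> #|E'| = j -> h E = h E'.
Proof.
elim: j U k h c => [|j IH] U k h c le_jk le_jkU hsum E E' sEU sE'U cE cE'.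
  by move/cards0_eq: cE => ->; move/cards0_eq: cE' => ->.
apply: (eq_of_exchange (U := U) (j := j)) => // a b F aU bU ab sFU aF bF cF.
set U' := U :\ a :\ b.
have aU' : a \notin U' by rewrite !inE eqxx andbF.
have bU' : b \notin U' by rewrite !inE eqxx.
have sU'U : U' \subset U by apply: subset_trans (subD1set _ _) (subD1set _ _).
have cU' : #|U'| = (#|U| - 2)%N.
  by rewrite [#|U|](cardsD1 a) (cardsD1 b (U :\ a)) !inE eq_sym ab aU bU add1n add1n subn2.
have k_gt0 : (0 < k)%N := leq_ltn_trans (leq0n j) le_jk.
(* [d] has zero sums over the j-subsets of every (k-1)-subset of [U'], so by
   induction it is constant on the j-subsets of [U'], and that constant is 0. *)
pose d F := h (a |: F) - h (b |: F).
have dsum (K : {set T}) : K \subset U' -> #|K| = k.-1 ->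
    \sum_(F : {set T} | (F \subset K) && (#|F| == j)%N) d F = 0.
  move=> sKU' cK.
  have aK : a \notin K by apply: contraNN aU' => /(subsetP sKU').
  have bK : b \notin K by apply: contraNN bU' => /(subsetP sKU').
  have sKU := subset_trans sKU' sU'U.
  have cxK x : x \notin K -> #|x |: K| = k.
    by move=> xK; rewrite cardsU1 xK cK add1n prednK.
  apply/eqP; rewrite sumrB subr_eq0; apply/eqP.
  apply: (addIr (\sum_(E : {set T} | (E \subset K) && (#|E| == j.+1)%N) h E)).
  rewrite -(sum_subsets_setU1 _ _ aK) -(sum_subsets_setU1 _ _ bK).
  by rewrite !hsum ?cxK // subUset sub1set ?aU ?bU.
have le_jk1 : (j <= k.-1)%N by rewrite -ltnS prednK.
have le_jkU' : (j + k.-1 <= #|U'|)%N by rewrite cU'; move: le_jkU k_gt0; clear; lia.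
have dconst := IH U' k.-1 d 0 le_jk1 le_jkU' dsum.
have [K0 sK0U' cK0] := exists_subset (leq_trans (leq_addl j _) le_jkU').
have sFU' : F \subset U'.
  by rewrite !subsetD1 sFU aF bF.
have := dsum K0 sK0U' cK0.
rewrite (eq_bigr (fun=> d F)) => [|F' /andP[sF'K0 /eqP cF']]; last first.
  by apply: dconst => //; apply: subset_trans sF'K0 sK0U'.
rewrite sum_subsets_const cK0 => /eqP; rewrite mulrn_eq0 => /orP[|/eqP/subr0_eq //].
by rewrite eqn0Ngt bin_gt0 le_jk1.
Qed.
End SubsetSums.

Lemma card_preim_sum (J U : finType) (f : J -> U) (P : pred U) :
  #|[set i | P (f i)]| = \sum_(u | P u) #|[set i | f i == u]|.
Proof.
rewrite -sum1dep_card (partition_big f P) //=; apply: eq_bigr => u Pu.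
rewrite sum1dep_card; apply: eq_card => i; rewrite !inE.
by case: (f i =P u) => [->|]; rewrite ?Pu ?andbF.
Qed.

Lemma imset_eq_preimset (T : finType) (f : T -> T) (C K : {set T}) :
  injective f -> (f @: C == K) = (C == f @^-1: K).
Proof.
move=> f_inj; apply/eqP/eqP => [<- | ->].
  by apply/setP => x; rewrite inE mem_imset.
by apply/setP => y; rewrite -{1}[y](f_invF f_inj) mem_imset // inE f_invF.
Qed.

Section PerpendicularFamily.
Variables (I J : finType) (k lam : nat) (pi : J -> I -> I).
Hypothesis pi_inj : forall i, injective (pi i).
Hypothesis pi_hom : forall C : {set I}, #|C| = k -> forall K : {set I}, #|K| = k ->
  #|[set i | pi i @: C == K]| = lam.

Lemma card_imset_subset (D K : {set I}) : #|K| = k ->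
  #|[set i | pi i @: D \subset K]| = \sum_(C : {set I} | (D \subset C) && (#|C| == k)) lam.
Proof.
move=> cK.
have -> : [set i | pi i @: D \subset K] =
          [set i | (D \subset pi i @^-1: K) && (#|pi i @^-1: K| == k)].
  by apply/setP => i; rewrite !inE sub_imset_pre card_preimset // cK eqxx andbT.
rewrite (card_preim_sum (fun i => pi i @^-1: K) (fun C => (D \subset C) && (#|C| == k))).
apply: eq_bigr => C /andP[_ /eqP cC]; rewrite -(pi_hom cC cK).
by apply: eq_card => i; rewrite !inE imset_eq_preimset // eq_sym.
Qed.

Lemma card_imset_subset_sum (D K : {set I}) j : #|D| = j ->
  #|[set i | pi i @: D \subset K]| =
  \sum_(E : {set I} | (E \subset K) && (#|E| == j)) #|[set i | pi i @: D == E]|.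
Proof.
move=> cD.
rewrite -(card_preim_sum (fun i => pi i @: D) (fun E => (E \subset K) && (#|E| == j))).
by apply: eq_card => i; rewrite !inE card_imset // cD eqxx andbT.
Qed.

Lemma card_imset_eq_const (D E E' : {set I}) j :
  j <= k -> j + k <= #|I| -> #|D| = j -> #|E| = j -> #|E'| = j ->
  #|[set i | pi i @: D == E]| = #|[set i | pi i @: D == E']|.
Proof.
move=> le_jk le_jkI cD cE cE'.
pose h E := (#|[set i | pi i @: D == E]|%:R)%R : int.
suff /eqP : h E = h E' by rewrite eqr_nat => /eqP.
pose c := ((\sum_(C : {set I} | (D \subset C) && (#|C| == k)) lam)%:R)%R : int.
apply: (eq_of_const_subset_sums (U := [set: I]) (c := c) le_jk);
  rewrite ?cardsT ?subsetT //.
by move=> K _ cK; rewrite -natr_sum -card_imset_subset_sum // card_imset_subset.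
Qed.

End PerpendicularFamily.

Section Images.
Variables (T : finType) (f : T -> T).
Hypothesis f_inj : injective f.

Lemma preimset_imset (b : {set T}) : f @^-1: (f @: b) = b.
Proof. by apply/esym/eqP; rewrite -imset_eq_preimset. Qed.

Lemma imset_preimset (K : {set T}) : f @: (f @^-1: K) = K.
Proof. by apply/eqP; rewrite imset_eq_preimset. Qed.

Lemma mem_imset_blocks (S : {set {set T}}) (K : {set T}) :
  (K \in [set f @: b | b : {set T} in S]) = (f @^-1: K \in S).
Proof.
apply/imsetP/idP => [[b bS ->] | KS]; first by rewrite preimset_imset.
by exists (f @^-1: K); rewrite ?imset_preimset.
Qed.

Lemma steiner_system_imset t k (S : {set {set T}}) :
  steiner_system t k S -> steiner_system t k [set f @: b | b : {set T} in S].
Proof.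
move=> [Sk St]; split => [_ /imsetP[b bS ->] | X cX]; first by rewrite card_imset // Sk.
have -> : [set K in [set f @: b | b : {set T} in S] | X \subset K] =
          [set f @: b | b : {set T} in [set b in S | f @^-1: X \subset b]].
  apply/setP => K; rewrite inE !mem_imset_blocks inE.
  by rewrite -{1}(imset_preimset X) sub_imset_pre.
by rewrite card_imset ?St ?card_preimset //; apply: imset_inj.
Qed.

End Images.

Lemma sum_count_supersets (T : finType) t k (F : seq {set {set T}}) (W : {set T}) :
  (forall S, S \in F -> steiner_system t k S) -> #|W| = t ->
  \sum_(K : {set T} | (W \subset K) && (#|K| == k))
     count (fun S : {set {set T}} => K \in S) F = size F.
Proof.
elim: F => [|S F IH] sysF cW /=; first by rewrite big1.
rewrite big_split /= IH //; last by move=> S' S'F; apply: sysF; rewrite inE S'F orbT.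
have [Sk St] := sysF S (mem_head _ _).
rewrite -add1n; congr (_ + _).
rewrite -(St W cW) -sum1dep_card big_mkcond [RHS]big_mkcond /=.
apply: eq_bigr => K _; case KS: (K \in S); last by case: ifP.
by rewrite Sk // eqxx andbT.
Qed.

Section Supersets.
Variable T : finType.

Lemma sum_supersets1 (W : {set T}) (u : {set T} -> nat) :
  \sum_(K : {set T} | (W \subset K) && (#|K| == #|W|.+1)) u K = \sum_(p in ~: W) u (p |: W).
Proof.
rewrite -(big_imset _ (h := fun p => p |: W)) => [|p q]; last first.
  rewrite !inE => pW _ /setP/(_ p); rewrite !inE eqxx => /esym/orP[/eqP //|pW'].
  by rewrite pW' in pW.
apply: eq_bigl => K; apply/andP/imsetP => [[sWK /eqP cK] | [p pW ->]].
  have /cards1P[p eKW] : #|K :\: W| == 1 by rewrite cardsDS // cK subSnn.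
  exists p; first by move: (set11 p); rewrite -eKW !inE => /andP[].
  by rewrite -eKW setUC -[X in X :|: _](setIidPr sWK) setID.
by rewrite subsetUr cardsU1 -in_setC pW.
Qed.

Lemma uniform_of_superset_sums (A : {set T}) t N (u : {set T} -> nat) :
  #|A| <= t -> #|A| + t < #|T| ->
  (forall K K' : {set T}, #|K| = t.+1 -> #|K'| = t.+1 ->
     K :&: A = K' :&: A -> u K = u K') ->
  (forall W : {set T}, #|W| = t ->
     \sum_(K : {set T} | (W \subset K) && (#|K| == t.+1)) u K = N) ->
  forall K : {set T}, #|K| = t.+1 -> (#|T| - t) * u K = N.
Proof.
move=> leAt ltAtT u_loc u_sum K.
have [d] := ubnP #|A :\: K|; elim: d K => // d IH K ltKd cK.
set X := K :&: A.
have leXA : #|X| <= #|A| by rewrite subset_leq_card // subsetIr.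
have [Y sYKA cY] : exists2 Y : {set T}, Y \subset K :\: A & #|Y| = t - #|X|.
  by apply: exists_subset; rewrite cardsD cK -/X; lia.
have YnA y : y \in Y -> y \notin A by move/(subsetP sYKA); rewrite inE => /andP[].
have YA : Y :&: A = set0.
  by apply/setP => y; rewrite !inE; apply/negbTE/andP => -[/YnA/negbTE->].
(* The t-set [W] lies between [K :&: A] and [K]: its (t+1)-supersets adding a point
   outside [A] share the value [u K], the others miss fewer points of [A]. *)
set W := X :|: Y.
have WA : W :&: A = X by rewrite setIUl YA setU0 -setIA setIid.
have cW : #|W| = t.
  rewrite cardsU cY (_ : X :&: Y = set0) ?cards0; first by lia.
  apply/setP => y; rewrite !inE.
  by case: (boolP (y \in Y)) => [/YnA/negbTE->|_]; rewrite ?andbF.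
have uW p : p \notin A -> p \notin W -> u (p |: W) = u K.
  move=> pA pW; apply: u_loc => //; first by rewrite cardsU1 pW cW.
  rewrite -/X -WA; apply/setP => y; rewrite !inE.
  by case: (y =P p) => [->|]; rewrite ?(negbTE pA) ?andbF.
have NW p : p \in A -> p \notin W -> (#|T| - t) * u (p |: W) = N.
  move=> pA pW; apply: IH; last by rewrite cardsU1 pW cW.
  have pX : p \notin X by apply: contra pW; apply: (subsetP (subsetUl _ _)).
  rewrite cardsD (_ : A :&: (p |: W) = p |: X); last first.
    by rewrite setIC setIUl WA (setIidPl _) // sub1set.
  have ltXA : #|X| < #|A|.
    by rewrite (cardsD1 p A) pA ltnS subset_leq_card // subsetD1 subsetIr pX.
  by move: ltKd ltXA; rewrite cardsD cardsU1 pX setIC -/X /=; lia.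
have sumW : \sum_(p in ~: W :&: A) u (p |: W) + #|~: W :\: A| * u K = N.
  rewrite -(u_sum W cW) -cW sum_supersets1 [RHS](bigID (mem A)) /=.
  congr (_ + _); first by apply: eq_bigl => p; rewrite !inE.
  rewrite -sum_nat_const; apply: eq_big => [p | p]; first by rewrite !inE andbC.
  by rewrite in_setD in_setC => /andP[pA pW]; rewrite uW.
have cM : #|~: W :&: A| + #|~: W :\: A| = #|T| - t by rewrite cardsID -cW -(cardsC W) addKn.
have out_gt0 : 0 < #|~: W :\: A|.
  have : #|~: W :&: A| <= #|A| by rewrite subset_leq_card // subsetIr.
  by move: cM ltAtT; lia.
move: sumW => /(congr1 (muln (#|T| - t))).
rewrite mulnDr big_distrr /= (eq_bigr (fun=> N)) => [|p]; last first.
  by rewrite in_setI in_setC => /andP[pW pA]; apply: NW.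
rewrite sum_nat_const mulnCA => sumW; apply/eqP; rewrite -(eqn_pmul2l out_gt0).
by apply/eqP/(@addnI (#|~: W :&: A| * N)); rewrite sumW -mulnDl cM.
Qed.
End Supersets.

Section Transfer.
Variables (T I : finType) (B : {set T}) (e : I -> T) (e' : T -> I).
Hypotheses (e_in : forall j, e j \in B) (eK : cancel e e') (e'K : {in B, cancel e' e}).
Variable p : I -> I.
Hypothesis p_inj : injective p.

Definition transfer (x : T) : T := if x \in B then e (p (e' x)) else x.

Lemma transfer_e j : transfer (e j) = e (p j).
Proof. by rewrite /transfer e_in eK. Qed.

Lemma transfer_out x : x \notin B -> transfer x = x.
Proof. by rewrite /transfer => /negbTE->. Qed.

Lemma transfer_inj : injective transfer.
Proof.
have e_inj := can_inj eK.
move=> x y; rewrite /transfer.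
case: (boolP (x \in B)) => xB; case: (boolP (y \in B)) => yB.
- by move/e_inj/p_inj/(congr1 e); rewrite !e'K.
- by move=> exy; move: yB; rewrite -exy e_in.
- by move=> exy; move: xB; rewrite exy e_in.
- by [].
Qed.

Lemma mem_transfer_out (b : {set T}) x : x \notin B -> (x \in transfer @: b) = (x \in b).
Proof. by move=> xB; rewrite -{1}(transfer_out xB) mem_imset //; apply: transfer_inj. Qed.

Lemma mem_transfer_e (b : {set T}) j : (e j \in transfer @: b) = (j \in p @: (e @^-1: b)).
Proof.
apply/imsetP/imsetP => [[y yb ejy] | [i ib ->]]; last first.
  by exists (e i); [rewrite inE in ib | rewrite transfer_e].
have yB : y \in B.
  by apply: contraT => yB; move: (e_in j); rewrite ejy (transfer_out yB) (negbTE yB).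
by exists (e' y); [rewrite inE e'K | apply: (can_inj eK); rewrite ejy /transfer yB].
Qed.

Lemma transfer_imset_eq (b K : {set T}) :
  (transfer @: b == K) = (b :\: B == K :\: B) && (p @: (e @^-1: b) == e @^-1: K).
Proof.
apply/eqP/andP => [<- | [/eqP outK /eqP inK]].
  split; apply/eqP/setP => x; rewrite !inE ?mem_transfer_e //.
  by case: (boolP (x \in B)) => //= xB; rewrite mem_transfer_out.
apply/setP => x; case: (boolP (x \in B)) => xB.
  by rewrite -(e'K xB) mem_transfer_e inK inE.
by rewrite mem_transfer_out // -[LHS]andTb -[RHS]andTb -xB -!in_setD outK.
Qed.

Lemma card_preimset_enum (X : {set T}) : #|e @^-1: X| = #|X :&: B|.
Proof.
rewrite -(card_imset _ (can_inj eK)); apply: eq_card => x; rewrite inE.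
apply/imsetP/andP => [[j jX ->] | [xX xB]]; first by rewrite inE in jX; rewrite jX e_in.
by exists (e' x); rewrite ?inE e'K.
Qed.

End Transfer.

Section TransferredFamily.
Variables (T I J : finType) (B : {set T}) (e : I -> T) (e' : T -> I).
Hypotheses (e_in : forall j, e j \in B) (eK : cancel e e') (e'K : {in B, cancel e' e}).
Variables (k lam : nat) (pi : J -> I -> I).
Hypothesis pi_inj : forall i, injective (pi i).
Hypothesis pi_hom : forall C : {set I}, #|C| = k -> forall K : {set I}, #|K| = k ->
  #|[set i | pi i @: C == K]| = lam.
Hypothesis le_kkI : k + k <= #|I|.

Lemma card_transfer_imset_eq_const (b K K' : {set T}) :
  #|b| = k -> #|K| = k -> #|K'| = k -> K :\: B = K' :\: B ->
  #|[set i | transfer B e e' (pi i) @: b == K]| =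
  #|[set i | transfer B e e' (pi i) @: b == K']|.
Proof.
move=> cb cK cK' KK'.
have cpre (X : {set T}) : #|X| = k -> #|e @^-1: X| = k - #|X :\: B|.
  by move=> <-; rewrite (card_preimset_enum e_in eK e'K) -(cardsID B X) addnK.
have tr (X : {set T}) : [set i | transfer B e e' (pi i) @: b == X] =
    [set i | (b :\: B == X :\: B) && (pi i @: (e @^-1: b) == e @^-1: X)].
  by apply/setP => i; rewrite !inE transfer_imset_eq.
rewrite !tr -KK'.
case: (b :\: B =P K :\: B) => [bK | _]; last by apply: eq_card => i; rewrite !inE.
apply: (card_imset_eq_const pi_inj pi_hom (j := k - #|b :\: B|));
  rewrite ?leq_subr ?cpre ?bK ?KK' //.
by apply: leq_trans le_kkI; rewrite leq_add2r leq_subr.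
Qed.

End TransferredFamily.

Lemma exists_enum_bijection (T : finType) (B : {set T}) m : #|B| = m -> 0 < m ->
  exists e : 'I_m -> T, exists e' : T -> 'I_m,
    [/\ forall j, e j \in B, cancel e e' & {in B, cancel e' e}].
Proof.
move=> cB m_gt0; have [x0 x0B] : exists x0, x0 \in B by apply/card_gt0P; rewrite cB.
exists (fun j => enum_val (cast_ord (esym cB) j)).
exists (fun x => cast_ord cB (enum_rank_in x0B x)).
split=> [j | j | x xB]; first exact: enum_valP.
  by rewrite enum_valK_in cast_ordKV.
by rewrite cast_ordK enum_rankK_in.
Qed.

Lemma count_mem_imset_blocks (T J : finType) (f : J -> T -> T) (S : {set {set T}})
    (K : {set T}) :
  (forall i, injective (f i)) ->
  count (fun S' : {set {set T}} => K \in S')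
        [seq [set f i @: b | b : {set T} in S] | i <- enum J] =
  \sum_(b in S) #|[set i | f i @: b == K]|.
Proof.
move=> f_inj; rewrite count_map -sum1_count big_enum_cond sum1dep_card.
have -> : [set i | K \in [set f i @: b | b : {set T} in S]] = [set i | f i @^-1: K \in S].
  by apply/setP => i; rewrite !inE mem_imset_blocks.
rewrite (card_preim_sum (fun i => f i @^-1: K) (mem S)).
by apply: eq_bigr => b _; apply: eq_card => i; rewrite !inE imset_eq_preimset // eq_sym.
Qed.

Lemma eq_divn_mul_bin m k lam x : 0 < m -> m * x = lam * 'C(m, k.+1) ->
  x = lam * 'C(m.-1, k) %/ k.+1.
Proof.
move=> m_gt0 mx; suff -> : lam * 'C(m.-1, k) = k.+1 * x by rewrite mulKn.
apply/eqP; rewrite -(eqn_pmul2l m_gt0) mulnCA mul_bin_diag mulnCA -mx.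
by rewrite (mulnCA m).
Qed.

Theorem theorem19 (n : nat) (S : {set {set 'I_n}}) (A B : {set 'I_n}) (lam : nat) :
  14 <= n ->
  steiner_system 3 4 S ->
  A :&: B = set0 -> A :|: B = [set: 'I_n] -> #|A| = 3 -> #|B| = n - 3 ->
  (exists M : 'M['I_(n - 3)]_(lam * 'C(n - 3, 4), n - 3),
      perpendicular_array M) ->
  exists F : seq {set {set 'I_n}}, large_set 3 4 (lam * 'C(n - 4, 3) %/ 4) F.
Proof.
move=> n_ge14 sysS AB0 ABT cA cB [M [M_inj M_pa]].
have AE : A = ~: B.
  rewrite -setTD -ABT setDUl setDv setU0; apply/esym/setDidPl.
  by rewrite -setI_eq0 AB0.
have n3_gt0 : 0 < n - 3 by lia.
have [e [e' [e_in eK e'K]]] := exists_enum_bijection cB n3_gt0.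
pose sigma i := transfer B e e' (fun j => M i j).
have sigma_inj i : injective (sigma i) := transfer_inj e_in eK e'K (M_inj i).
pose F := [seq [set sigma i @: b | b : {set 'I_n} in S]
           | i <- enum 'I_(lam * 'C(n - 3, 4))].
have sysF S' : S' \in F -> steiner_system 3 4 S'.
  by case/mapP => i _ ->; apply: steiner_system_imset.
exists F; split => // K cK.
pose u K := count (fun S' : {set {set 'I_n}} => K \in S') F.
have u_loc (K1 K2 : {set 'I_n}) :
    #|K1| = 4 -> #|K2| = 4 -> K1 :&: A = K2 :&: A -> u K1 = u K2.
  rewrite AE -!setDE => c1 c2 K12; rewrite /u !count_mem_imset_blocks //.
  apply: eq_bigr => b bS.
  apply: (card_transfer_imset_eq_const e_in eK e'K M_inj M_pa) => //.
  - by rewrite card_ord; lia.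
  - exact: sysS.1.
have u_sum (W : {set 'I_n}) : #|W| = 3 ->
    \sum_(K : {set 'I_n} | (W \subset K) && (#|K| == 4)) u K = lam * 'C(n - 3, 4).
  by move=> cW; rewrite (sum_count_supersets sysF cW) size_map size_enum_ord.
have leA3 : #|A| <= 3 by rewrite cA.
have ltA3n : #|A| + 3 < #|'I_n| by rewrite cA card_ord; lia.
have := uniform_of_superset_sums leA3 ltA3n u_loc u_sum cK.
by rewrite card_ord => /(eq_divn_mul_bin n3_gt0); rewrite -subnS.
Qed.
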